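(* Let $G$ be a finite graph with $\nabla(G) = k$. Then $\kappa(G)\leq k+1$.
   Context: For a graph $G$, a set $S\subseteq V(G)$ is a decycling set of $G$ if $G - S$ is acyclic (a forest). The decycling number $\nabla(G)$ is the smallest size of a decycling set of $G$. $\kappa(G)$ denotes the (vertex) connectivity of $G$. *)

(* A finite simple graph is a symmetric irreflexive relation
   e on a finite vertex type T. *)
From mathcomp Require Import all_boot.
From mathcomp Require Import boolp.

Set Implicit Arguments.
Unset Strict Implicit.
Unset Printing Implicit Defensive.

Section Graph.
Variables (T : finType) (e : rel T).

(* A cycle of G avoiding S (i.e. a cycle of G - S): a sequence of at least
   3 pairwise distinct vertices, none in S, consecutive ones (cyclically)
   adjacent. *)
Definition cycle_avoiding (S : {set T}) (c : seq T) : Prop :=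
  [/\ 2 < size c, uniq c, cycle e c & all (fun x => x \notin S) c].

Definition decycling (S : {set T}) : Prop :=
  forall c : seq T, ~ cycle_avoiding S c.

Lemma decycling_setT : decycling setT.
Proof.
move=> [|x c] [] //= _ _ _; by rewrite in_setT.
Qed.

Lemma decycling_exists : exists n, `[< exists S : {set T}, #|S| = n /\ decycling S >].
Proof. exists #|[set: T]|; apply/asboolP; exists setT; split=> //; exact: decycling_setT. Qed.

Definition decycling_number : nat := ex_minn decycling_exists.

Definition rel_minus (S : {set T}) : rel T :=
  fun x y => [&& e x y, x \notin S & y \notin S].

Definition separating (S : {set T}) : bool :=
  (#|~: S| <= 1) ||
  [exists x, exists y, [&& x \notin S, y \notin S & ~~ connect (rel_minus S) x y]].

Lemma separating_exists : exists n, [exists S : {set T}, (#|S| == n) && separating S].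
Proof.
exists #|[set: T]|; apply/existsP; exists setT; rewrite eqxx /separating.
by rewrite setCT cards0.
Qed.

Definition connectivity : nat := ex_minn separating_exists.

End Graph.

(* Let S be a minimum decycling set, so G - S is a forest. A nonempty forest
   has a vertex v of degree at most 1: otherwise a maximal path could be
   extended, or closed into a cycle, at its end. Adding the (at most one)
   neighbour of v in G - S to S isolates v, which gives a separating set of
   size at most k + 1. If G - S is empty, S itself is separating. *)
From mathcomp Require Import all_boot.
From mathcomp Require Import boolp.
From mathcomp Require Import zify.

Set Implicit Arguments.
Unset Strict Implicit.
Unset Printing Implicit Defensive.

Section Forest.
Variables (T : finType) (e : rel T).
Hypotheses (e_sym : symmetric e) (e_irr : irreflexive e).
Variable S : {set T}.

Definition two_nbrs (x : T) : bool := [exists y1, exists y2,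
  [&& y1 != y2, e x y1, e x y2, y1 \notin S & y2 \notin S]].

(* The path is [x :: q] read backwards: it is extended at its head [x]. *)
Definition avoiding_path (x : T) (q : seq T) : bool :=
  [&& uniq (x :: q), path e x q & all (fun z => z \notin S) (x :: q)].

Lemma avoiding_path_chord_cycle x a q y :
  avoiding_path x (a :: q) -> e x y -> y \in a :: q -> y != a ->
  exists c, cycle_avoiding e S c.
Proof.
move=> /and3P[uniq_p path_p out_p] exy y_aq ya.
have [q1 [q2 def_aq]] : exists q1 q2, a :: q = q1 ++ y :: q2.
  by case/splitPr: y_aq => q1 q2; exists q1, q2.
have q1_gt0 : 0 < size q1.
  by case: q1 def_aq => // -[a_y _]; rewrite a_y eqxx in ya.
rewrite def_aq -cat_rcons in uniq_p path_p out_p.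
exists (x :: rcons q1 y); split.
- by rewrite /= size_rcons; lia.
- by move: uniq_p; rewrite -cat_cons cat_uniq => /andP[].
- rewrite /= rcons_path last_rcons e_sym exy andbT.
  by move: path_p; rewrite cat_path => /andP[].
- by move: out_p; rewrite -cat_cons all_cat => /andP[].
Qed.

Lemma avoiding_path_extend x q : two_nbrs x -> avoiding_path x q ->
  (exists c, cycle_avoiding e S c) \/ (exists y, avoiding_path y (x :: q)).
Proof.
move=> /existsP[y1 /existsP[y2 /and5P[y12 exy1 exy2 y1S y2S]]] p_xq.
have [y [exy yS y_not_prev]] : exists y, [/\ e x y, y \notin S & y \notin take 1 q].
  case: q {p_xq} => [|a q]; first by exists y1.
  have [y1a|y1a] := eqVneq y1 a.
  - by exists y2; split; rewrite //= take0 mem_seq1 -y1a eq_sym.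
  - by exists y1; split; rewrite //= take0 mem_seq1.
have [y_xq|y_xq] := boolP (y \in x :: q); last first.
  right; exists y; move: p_xq => /and3P[uniq_p path_p out_p].
  apply/and3P; split; first by rewrite cons_uniq y_xq.
  - by rewrite /= e_sym exy.
  - by rewrite /= yS.
left; move: y_xq; rewrite inE => /predU1P[yx|].
  by move: exy; rewrite yx e_irr.
case: q p_xq y_not_prev => // a q p_xq; rewrite /= take0 mem_seq1 => ya y_aq.
exact: avoiding_path_chord_cycle p_xq exy y_aq ya.
Qed.

Lemma min_deg2_cycle x q : {in ~: S, forall v, two_nbrs v} ->
  avoiding_path x q -> exists c, cycle_avoiding e S c.
Proof.
move=> deg2; have [n] := ubnP (#|T| - size (x :: q)).
elim: n x q => [|n IHn] x q size_xq p_xq; first by rewrite ltn0 in size_xq.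
have x_out : x \in ~: S by move: p_xq => /and3P[_ _ /andP[]]; rewrite inE.
have [//|[y p_yxq]] := avoiding_path_extend (deg2 x x_out) p_xq.
have /and3P[uniq_yxq _ _] := p_yxq.
have := max_card (mem (y :: x :: q)); rewrite (card_uniqP uniq_yxq) /= => size_yxq.
by apply: IHn p_yxq; move: size_xq; rewrite /=; lia.
Qed.

Lemma decycling_low_deg_vertex x : decycling e S -> x \notin S ->
  exists2 v, v \notin S & ~~ two_nbrs v.
Proof.
move=> dec_S xS; apply/exists_inP; apply: contraT; rewrite negb_exists_in.
move=> /forall_inP deg2; case: (@min_deg2_cycle x [::]).
- by move=> v; rewrite inE => /deg2; rewrite negbK.
- by rewrite /avoiding_path /= xS.
- by move=> c /dec_S.
Qed.

End Forest.

Section Separating.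
Variables (T : finType) (e : rel T).
Hypothesis e_irr : irreflexive e.

Lemma connectivity_min (S : {set T}) : separating e S -> connectivity e <= #|S|.
Proof.
move=> sepS; rewrite /connectivity; case: ex_minnP => c _ min_c.
by apply: min_c; apply/existsP; exists S; rewrite eqxx.
Qed.

Lemma isolated_separating (S : {set T}) v : v \notin S ->
  {in ~: S, forall y, ~~ e v y} -> separating e S.
Proof.
move=> vS v_iso; rewrite /separating; case: leqP => //= card_gt1.
have [w] : exists w, w \in (~: S) :\ v.
  by apply/set0Pn; rewrite -card_gt0 (cardsD1 v) !inE vS in card_gt1 *; lia.
rewrite !inE => /andP[wv wS]; apply/existsP; exists v; apply/existsP; exists w.
rewrite vS wS /=; apply/negP => /connectP[[|a p] /= path_p last_p].
  by rewrite last_p eqxx in wv.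
move: path_p => /andP[/and3P[eva _ aS] _].
by move: (v_iso a); rewrite inE aS eva => /(_ isT).
Qed.

Lemma low_deg_isolate (S : {set T}) v : v \notin S -> ~~ two_nbrs e S v ->
  exists2 S' : {set T}, #|S'| <= #|S|.+1 & separating e S'.
Proof.
move=> vS v_low; have [/existsP[u /andP[evu uS]]|no_nbr] :=
  boolP [exists u, e v u && (u \notin S)].
  exists (u |: S); first by rewrite cardsU1; case: (u \in S).
  apply: (@isolated_separating _ v).
    by rewrite !inE negb_or vS andbT; apply: contraTneq evu => ->; rewrite e_irr.
  move=> y; rewrite !inE negb_or => /andP[yu yS]; apply: contra v_low => evy.
  by apply/existsP; exists u; apply/existsP; exists y; rewrite eq_sym yu evu evy uS yS.
exists S => //; apply: (isolated_separating vS) => y; rewrite inE => yS.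
by apply: contra no_nbr => evy; apply/existsP; exists y; rewrite evy.
Qed.

End Separating.

Lemma decycling_numberP (T : finType) (e : rel T) :
  exists2 S : {set T}, #|S| = decycling_number e & decycling e S.
Proof.
by rewrite /decycling_number; case: ex_minnP => m /asboolP[S [<- ?]] _; exists S.
Qed.

Theorem mainTheorem2 (T : finType) (e : rel T) (k : nat) :
  symmetric e -> irreflexive e ->
  decycling_number e = k ->
  connectivity e <= k + 1.
Proof.
move=> e_sym e_irr <-; have [S <- dec_S] := decycling_numberP e.
have [S_co0|/set0Pn[x]] := eqVneq (~: S) set0.
  have sep_S : separating e S by rewrite /separating S_co0 cards0.
  exact: leq_trans (connectivity_min sep_S) (leq_addr _ _).
rewrite inE => xS; have [v vS v_low] := decycling_low_deg_vertex e_sym e_irr dec_S xS.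
have [S' card_S' sep_S'] := low_deg_isolate e_irr vS v_low.
by rewrite addn1; apply: leq_trans (connectivity_min sep_S') card_S'.
Qed.
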